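(* Let $n\ge1$ be an integer and $x\in\{0,1,\dots,n\}$ an observed value of $X\sim B(n,p)$. For $\alpha\in(0,1)$ let the prior of $p$ be the triangle distribution with mode $\alpha$, $$\pi(p)=\begin{cases}\frac{2}{\alpha}p, & 0<p\le\alpha,\\ \frac{2}{1-\alpha}(1-p), & \alpha<p<1,\end{cases}$$ and let $g(\alpha)$ be the corresponding posterior mean of $p$: $$g(\alpha)=\frac{\frac{2}{\alpha}\int_0^\alpha p^{x+2}(1-p)^{n-x}\,dp+\frac{2}{1-\alpha}\int_\alpha^1 p^{x+1}(1-p)^{n-x+1}\,dp}{\frac{2}{\alpha}\int_0^\alpha p^{x+1}(1-p)^{n-x}\,dp+\frac{2}{1-\alpha}\int_\alpha^1 p^{x}(1-p)^{n-x+1}\,dp}.$$ Then the iterative limit obtained by replacing the mode $\alpha$ of the prior with the posterior mean on every iteration, namely a point $\tau\in(0,1)$ with $g(\tau)=\tau$, exists and is unique.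
   Context: $B(n,p)$ is the binomial distribution with $n$ trials and success probability $p\in(0,1)$. The iterative limit (iterative Bayes estimate) is by definition a value $\tau\in(0,1)$ at which the prior mode coincides with the posterior mean, i.e. $g(\tau)=\tau$. *)

From Stdlib Require Import Reals.
From Coquelicot Require Import Coquelicot.
Open Scope R_scope.

(* Posterior mean of p under the triangle prior with mode a, for an observed
   value x of X ~ B(n,p).  (n - x is truncated nat subtraction; the theorem
   assumes x <= n.) *)
Definition post_mean (n x : nat) (a : R) : R :=
  (2 / a * RInt (fun p => p ^ (x + 2) * (1 - p) ^ (n - x)) 0 a
   + 2 / (1 - a) * RInt (fun p => p ^ (x + 1) * (1 - p) ^ (n - x + 1)) a 1)
  /
  (2 / a * RInt (fun p => p ^ (x + 1) * (1 - p) ^ (n - x)) 0 a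
   + 2 / (1 - a) * RInt (fun p => p ^ x * (1 - p) ^ (n - x + 1)) a 1).

(* Write [tri_prior a p = min (p/a, (1-p)/(1-a))] for half the triangle density and [w] for
   the likelihood. Clearing the denominator of the posterior mean, [g(a) = a] becomes
   [D(a) = 0] with [D(a) = \int_0^1 w(p) (p - a) tri_prior a p dp]. For fixed [p] the kernel
   [(p - a) tri_prior a p] equals [p^2/a - p] for [p <= a] and [(1-p) - (1-p)^2/(1-a)] for
   [p >= a]; it is strictly decreasing and 1-Lipschitz in [a], and lies between
   [p(1-p) - 2a] and [2(1-a) - p(1-p)]. So [D] is strictly decreasing and continuous on
   (0,1), positive near 0 and negative near 1, and has exactly one zero. *)

From Stdlib Require Import Reals Lra Ranalysis5.
From Coquelicot Require Import Coquelicot.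
Open Scope R_scope.

Lemma continuous_Rmult (f g : R -> R) p :
  continuous f p -> continuous g p -> continuous (fun q => f q * g q) p.
Proof. apply (continuous_mult f g). Qed.

Lemma continuous_Rminus (f g : R -> R) p :
  continuous f p -> continuous g p -> continuous (fun q => f q - g q) p.
Proof. apply (continuous_minus f g). Qed.

Lemma continuous_Rmin (f g : R -> R) p :
  continuous f p -> continuous g p -> continuous (fun q => Rmin (f q) (g q)) p.
Proof.
  intros Hf Hg.
  apply (continuous_ext (fun q => (f q + g q - Rabs (f q - g q)) * / 2)).
  { intros q. unfold Rmin; destruct Rle_dec; [rewrite Rabs_left1 | rewrite Rabs_right]; lra. }
  apply continuous_Rmult; [|apply continuous_const].
  apply continuous_Rminus.
  - apply (continuous_plus f g); assumption.
  - apply continuous_Rabs_comp, continuous_Rminus; assumption.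
Qed.

Ltac solve_continuous :=
  repeat match goal with
  | |- continuous (fun q => @?f q * @?g q) _ => apply (continuous_Rmult f g)
  | |- continuous (fun q => @?f q - @?g q) _ => apply (continuous_Rminus f g)
  | |- continuous (fun q => Rmin (@?f q) (@?g q)) _ => apply (continuous_Rmin f g)
  | |- continuous (fun q => q) _ => apply continuous_id
  | |- continuous (fun _ => _) _ => apply continuous_const
  end.

Lemma ex_RInt_continuous_R (f : R -> R) a b : (forall p, continuous f p) -> ex_RInt f a b.
Proof. intros Hf; apply (ex_RInt_continuous (V := R_CompleteNormedModule)); auto. Qed.

Lemma RInt_ext_R (f g : R -> R) a b : (forall p, Rmin a b < p < Rmax a b -> f p = g p) ->
  RInt f a b = RInt g a b.
Proof. apply RInt_ext. Qed.

Lemma RInt_Rminus (f g : R -> R) a b : (forall p, continuous f p) -> (forall p, continuous g p) ->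
  RInt (fun p => f p - g p) a b = RInt f a b - RInt g a b.
Proof. intros Hf Hg; apply (RInt_minus f g); apply ex_RInt_continuous_R; assumption. Qed.

Lemma RInt_Rmult_l (f : R -> R) c a b : (forall p, continuous f p) ->
  RInt (fun p => c * f p) a b = c * RInt f a b.
Proof. intros Hf; apply (RInt_scal f); apply ex_RInt_continuous_R; assumption. Qed.

Lemma RInt_Chasles_R (f : R -> R) a b c : (forall p, continuous f p) ->
  RInt f a b + RInt f b c = RInt f a c.
Proof. intros Hf; apply (RInt_Chasles f); apply ex_RInt_continuous_R; assumption. Qed.

Lemma RInt_le_R (f g : R -> R) a b : a <= b ->
  (forall p, continuous f p) -> (forall p, continuous g p) ->
  (forall p, a < p < b -> f p <= g p) -> RInt f a b <= RInt g a b.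
Proof. intros; apply RInt_le; auto; apply ex_RInt_continuous_R; assumption. Qed.

Lemma RInt_pos (f : R -> R) a b : a < b -> (forall p, continuous f p) ->
  (forall p, a < p < b -> 0 < f p) -> 0 < RInt f a b.
Proof.
  intros Hab Hf Hpos.
  replace 0 with (RInt (fun _ => 0) a b) by (rewrite RInt_const; apply Rmult_0_r).
  apply RInt_lt; auto using continuous_const.
Qed.

(* Half the density of the triangle prior with mode [a]. *)
Definition tri_prior (a p : R) : R := Rmin (p / a) ((1 - p) / (1 - a)).

Lemma tri_prior_left a p : 0 < a < 1 -> p <= a -> tri_prior a p = p / a.
Proof.
  intros Ha Hp; apply Rmin_left.
  apply (Rmult_le_reg_r (a * (1 - a))); [nra|].
  field_simplify; nra.
Qed.

Lemma tri_prior_right a p : 0 < a < 1 -> a <= p -> tri_prior a p = (1 - p) / (1 - a).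
Proof.
  intros Ha Hp; apply Rmin_right.
  apply (Rmult_le_reg_r (a * (1 - a))); [nra|].
  field_simplify; nra.
Qed.

Lemma tri_prior_pos a p : 0 < a < 1 -> 0 < p < 1 -> 0 < tri_prior a p.
Proof. intros Ha Hp; apply Rmin_glb_lt; apply Rdiv_lt_0_compat; lra. Qed.

Lemma continuous_tri_prior a p : continuous (tri_prior a) p.
Proof. unfold tri_prior, Rdiv; solve_continuous. Qed.

Lemma RInt_tri_prior (f : R -> R) a : 0 < a < 1 -> (forall p, continuous f p) ->
  2 / a * RInt (fun p => f p * p) 0 a + 2 / (1 - a) * RInt (fun p => f p * (1 - p)) a 1
  = 2 * RInt (fun p => f p * tri_prior a p) 0 1.
Proof.
  intros Ha Hf.
  rewrite <- (RInt_Chasles_R _ 0 a 1) by (intro; solve_continuous; auto using continuous_tri_prior).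
  rewrite (RInt_ext_R (fun p => f p * tri_prior a p) (fun p => / a * (f p * p)) 0 a).
  2: { intros p Hp. rewrite Rmin_left, Rmax_right in Hp by lra.
       rewrite tri_prior_left by lra. field. lra. }
  rewrite (RInt_ext_R (fun p => f p * tri_prior a p) (fun p => / (1 - a) * (f p * (1 - p))) a 1).
  2: { intros p Hp. rewrite Rmin_left, Rmax_right in Hp by lra.
       rewrite tri_prior_right by lra. field. lra. }
  rewrite !RInt_Rmult_l by (intro; solve_continuous; auto).
  field. lra.
Qed.

Definition tri_drift (a p : R) : R := (p - a) * tri_prior a p.

Lemma continuous_tri_drift a p : continuous (tri_drift a) p.
Proof. unfold tri_drift; solve_continuous; apply continuous_tri_prior. Qed.

Lemma tri_drift_left a p : 0 < a < 1 -> p <= a -> tri_drift a p = p * p / a - p.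
Proof. intros Ha Hp; unfold tri_drift; rewrite tri_prior_left by lra; field; lra. Qed.

Lemma tri_drift_right a p : 0 < a < 1 -> a <= p ->
  tri_drift a p = (1 - p) - (1 - p) * (1 - p) / (1 - a).
Proof. intros Ha Hp; unfold tri_drift; rewrite tri_prior_right by lra; field; lra. Qed.

Lemma tri_drift_decreasing a b p : 0 < a -> a < b -> b < 1 -> 0 < p < 1 ->
  tri_drift b p < tri_drift a p.
Proof.
  intros Ha Hab Hb Hp.
  destruct (Rle_or_lt p a) as [Hpa | Hap]; [|destruct (Rle_or_lt p b) as [Hpb | Hbp]].
  - rewrite !tri_drift_left by lra.
    assert (0 < p * p) by nra.
    apply (Rmult_lt_reg_r (a * b)); [nra|]. field_simplify; try lra; nra.
  - rewrite (tri_drift_right a), (tri_drift_left b) by lra.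
    assert (0 <= p * (b - p) * (1 - a)) by (apply Rmult_le_pos; nra).
    assert (0 < (1 - p) * (p - a) * b) by (apply Rmult_lt_0_compat; nra).
    apply (Rmult_lt_reg_r (b * (1 - a))); [nra|]. field_simplify; try lra; nra.
  - rewrite !tri_drift_right by lra.
    assert (0 < (1 - p) * (1 - p)) by nra.
    apply (Rmult_lt_reg_r ((1 - a) * (1 - b))); [nra|]. field_simplify; try lra; nra.
Qed.

Lemma tri_drift_lipschitz a b p : 0 < a -> a < b -> b < 1 -> 0 <= p <= 1 ->
  tri_drift a p - tri_drift b p <= b - a.
Proof.
  intros Ha Hab Hb Hp.
  destruct (Rle_or_lt p a) as [Hpa | Hap]; [|destruct (Rle_or_lt p b) as [Hpb | Hbp]].
  - rewrite !tri_drift_left by lra.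
    assert (p * p <= a * b) by nra.
    apply (Rmult_le_reg_r (a * b)); [nra|]. field_simplify; try lra; nra.
  - rewrite (tri_drift_right a), (tri_drift_left b) by lra.
    assert (0 <= (p - a) * (p - a) * b) by (apply Rmult_le_pos; nra).
    assert (0 <= (b - p) * (b - p) * (1 - a)) by (apply Rmult_le_pos; nra).
    apply (Rmult_le_reg_r (b * (1 - a))); [nra|]. field_simplify; try lra; nra.
  - rewrite !tri_drift_right by lra.
    assert ((1 - p) * (1 - p) <= (1 - a) * (1 - b)) by nra.
    apply (Rmult_le_reg_r ((1 - a) * (1 - b))); [nra|]. field_simplify; try lra; nra.
Qed.

Lemma tri_drift_lower a p : 0 < a < 1 -> 0 <= p <= 1 -> p * (1 - p) - 2 * a <= tri_drift a p.
Proof.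
  intros Ha Hp.
  destruct (Rle_or_lt p a).
  - rewrite tri_drift_left by lra.
    assert (0 <= p * p * a) by (apply Rmult_le_pos; nra).
    apply (Rmult_le_reg_r a); [lra|]. field_simplify; try lra; nra.
  - rewrite tri_drift_right by lra.
    assert ((1 - p) * (1 - p) <= 1 - a) by nra.
    apply (Rmult_le_reg_r (1 - a)); [lra|]. field_simplify; try lra; nra.
Qed.

Lemma tri_drift_upper a p : 0 < a < 1 -> 0 <= p <= 1 -> tri_drift a p <= 2 * (1 - a) - p * (1 - p).
Proof.
  intros Ha Hp.
  destruct (Rle_or_lt p a).
  - rewrite tri_drift_left by lra.
    assert (p * p <= a) by nra.
    apply (Rmult_le_reg_r a); [lra|]. field_simplify; try lra; nra.
  - rewrite tri_drift_right by lra.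
    assert (0 <= (1 - p) * (1 - p) * (1 - a)) by (apply Rmult_le_pos; nra).
    apply (Rmult_le_reg_r (1 - a)); [lra|]. field_simplify; try lra; nra.
Qed.

Section Drift.

Variable w : R -> R.
Hypothesis w_continuous : forall p, continuous w p.
Hypothesis w_pos : forall p, 0 < p < 1 -> 0 < w p.

(* Up to the positive normalising integral, [drift a] is the posterior mean minus [a]. *)
Definition drift (a : R) : R := RInt (fun p => w p * tri_drift a p) 0 1.

Definition tri_posterior_mean (a : R) : R :=
  RInt (fun p => p * w p * tri_prior a p) 0 1 / RInt (fun p => w p * tri_prior a p) 0 1.

Let W := RInt w 0 1.
Let M := RInt (fun p => w p * (p * (1 - p))) 0 1.

Lemma drift_decreasing a b : 0 < a -> a < b -> b < 1 -> drift b < drift a.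
Proof.
  intros Ha Hab Hb. unfold drift.
  apply RInt_lt; [lra | intros; solve_continuous; auto using continuous_tri_drift .. |].
  intros p Hp. apply Rmult_lt_compat_l; [auto | apply tri_drift_decreasing; lra].
Qed.

Lemma drift_lipschitz a b : 0 < a -> a < b -> b < 1 -> drift a - drift b <= (b - a) * W.
Proof.
  intros Ha Hab Hb. unfold drift, W.
  rewrite <- RInt_Rminus, <- RInt_Rmult_l by (intro; solve_continuous; auto using continuous_tri_drift).
  apply RInt_le_R; [lra | intro; solve_continuous; auto using continuous_tri_drift .. |].
  intros p Hp. rewrite <- Rmult_minus_distr_l, Rmult_comm.
  apply Rmult_le_compat_r; [left; auto | apply tri_drift_lipschitz; lra].
Qed.

Lemma integral_w_pos : 0 < W.
Proof. apply RInt_pos; auto; lra. Qed.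

Lemma continuity_pt_drift a : 0 < a < 1 -> continuity_pt drift a.
Proof.
  intros Ha eps Heps.
  pose proof integral_w_pos as HW.
  exists (Rmin (eps / W) (Rmin a (1 - a))).
  split.
  - apply Rmin_glb_lt; [apply Rdiv_lt_0_compat | apply Rmin_glb_lt]; lra.
  - intros z [_ Hz]. simpl in *. unfold R_dist in *.
    pose proof (Rmin_l (eps / W) (Rmin a (1 - a))).
    pose proof (Rmin_r (eps / W) (Rmin a (1 - a))).
    pose proof (Rmin_l a (1 - a)). pose proof (Rmin_r a (1 - a)).
    apply Rabs_def2 in Hz.
    assert (Hzw : Rabs (z - a) * W < eps).
    { apply (Rmult_lt_reg_r (/ W)); [apply Rinv_0_lt_compat; lra|].
      rewrite Rmult_assoc, Rinv_r, Rmult_1_r by lra. apply Rabs_def1; unfold Rdiv in *; lra. }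
    destruct (Rtotal_order z a) as [Hza | [Hza | Hza]].
    + pose proof (drift_decreasing z a ltac:(lra) Hza ltac:(lra)).
      pose proof (drift_lipschitz z a ltac:(lra) Hza ltac:(lra)).
      rewrite Rabs_left in Hzw by lra. rewrite Rabs_right by lra. nra.
    + subst z. rewrite Rminus_diag, Rabs_R0. lra.
    + pose proof (drift_decreasing a z ltac:(lra) Hza ltac:(lra)).
      pose proof (drift_lipschitz a z ltac:(lra) Hza ltac:(lra)).
      rewrite Rabs_right in Hzw by lra. rewrite Rabs_left by lra. nra.
Qed.

Lemma drift_lower a : 0 < a < 1 -> M - 2 * a * W <= drift a.
Proof.
  intros Ha. unfold M, W, drift.
  rewrite <- (RInt_Rmult_l w (2 * a)), <- RInt_Rminus by (intro; solve_continuous; auto).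
  apply RInt_le_R; [lra | intro; solve_continuous; auto using continuous_tri_drift .. |].
  intros p Hp. pose proof (w_pos p Hp).
  pose proof (tri_drift_lower a p Ha ltac:(lra)). nra.
Qed.

Lemma drift_upper a : 0 < a < 1 -> drift a <= 2 * (1 - a) * W - M.
Proof.
  intros Ha. unfold M, W, drift.
  rewrite <- (RInt_Rmult_l w (2 * (1 - a))), <- RInt_Rminus by (intro; solve_continuous; auto).
  apply RInt_le_R; [lra | intro; solve_continuous; auto using continuous_tri_drift .. |].
  intros p Hp. pose proof (w_pos p Hp).
  pose proof (tri_drift_upper a p Ha ltac:(lra)). nra.
Qed.

Lemma drift_changes_sign : exists a0, 0 < a0 < 1 / 2 /\ 0 < drift a0 /\ drift (1 - a0) < 0.
Proof.
  assert (HM : 0 < M).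
  { apply RInt_pos; [lra | intro; solve_continuous; auto |].
    intros p Hp. pose proof (w_pos p Hp). apply Rmult_lt_0_compat; nra. }
  assert (HMW : 4 * M <= W).
  { unfold M, W. rewrite <- RInt_Rmult_l by (intro; solve_continuous; auto).
    apply RInt_le_R; [lra | intro; solve_continuous; auto .. |].
    intros p Hp. pose proof (w_pos p Hp).
    assert (0 <= w p * ((2 * p - 1) * (2 * p - 1))) by (apply Rmult_le_pos; [lra | apply Rle_0_sqr]).
    lra. }
  pose proof integral_w_pos as HW.
  exists (M / (4 * W)).
  assert (Ha0W : M / (4 * W) * W = M / 4) by (field; lra).
  assert (Ha0 : 0 < M / (4 * W) <= 1 / 16) by (split; nra).
  pose proof (drift_lower (M / (4 * W)) ltac:(lra)).
  pose proof (drift_upper (1 - M / (4 * W)) ltac:(lra)).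
  split; [|split]; lra.
Qed.

Lemma drift_unique_root : exists! a, 0 < a < 1 /\ drift a = 0.
Proof.
  destruct drift_changes_sign as [a0 [Ha0 [Hlo Hhi]]].
  destruct (IVT_interv (fun a => - drift a) a0 (1 - a0)) as [tau [Htau Hroot]];
    [intros a Ha; apply continuity_pt_opp, continuity_pt_drift | ..]; try lra.
  exists tau. split; [split; lra|].
  intros b [Hb Hdb].
  destruct (Rtotal_order tau b) as [Hlt | [Heq | Hgt]]; [| exact Heq |].
  - pose proof (drift_decreasing tau b ltac:(lra) Hlt ltac:(lra)). lra.
  - pose proof (drift_decreasing b tau ltac:(lra) Hgt ltac:(lra)). lra.
Qed.

Lemma tri_evidence_pos a : 0 < a < 1 -> 0 < RInt (fun p => w p * tri_prior a p) 0 1.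
Proof.
  intros Ha. apply RInt_pos; [lra | intro; solve_continuous; auto using continuous_tri_prior |].
  intros p Hp. apply Rmult_lt_0_compat; [auto | apply tri_prior_pos; lra].
Qed.

Lemma tri_posterior_mean_fixed_iff a : 0 < a < 1 -> tri_posterior_mean a = a <-> drift a = 0.
Proof.
  intros Ha. pose proof (tri_evidence_pos a Ha) as HZ.
  assert (Hdrift : drift a = RInt (fun p => p * w p * tri_prior a p) 0 1
                             - a * RInt (fun p => w p * tri_prior a p) 0 1).
  { unfold drift, tri_drift.
    rewrite <- RInt_Rmult_l, <- RInt_Rminus
      by (intro; solve_continuous; auto using continuous_tri_prior).
    apply RInt_ext_R; intros; ring. }
  unfold tri_posterior_mean. rewrite Hdrift.
  set (N := RInt (fun p => p * w p * tri_prior a p) 0 1) in *.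
  set (Z := RInt (fun p => w p * tri_prior a p) 0 1) in *.
  split; intro H.
  - rewrite <- H. field. lra.
  - replace N with (a * Z) by lra. field. lra.
Qed.
End Drift.

Definition likelihood (n x : nat) (p : R) : R := p ^ x * (1 - p) ^ (n - x).

Lemma continuous_likelihood n x p : continuous (likelihood n x) p.
Proof.
  apply (ex_derive_continuous (K := R_AbsRing) (V := R_NormedModule)).
  unfold likelihood; auto_derive; auto.
Qed.

Lemma likelihood_pos n x p : 0 < p < 1 -> 0 < likelihood n x p.
Proof. intros Hp; apply Rmult_lt_0_compat; apply pow_lt; lra. Qed.

Lemma post_mean_tri_posterior_mean n x a : 0 < a < 1 ->
  post_mean n x a = tri_posterior_mean (likelihood n x) a.
Proof.
  intros Ha. unfold post_mean, tri_posterior_mean.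
  rewrite (RInt_ext_R (fun p => p ^ (x + 2) * (1 - p) ^ (n - x)) (fun p => p * likelihood n x p * p)),
    (RInt_ext_R (fun p => p ^ (x + 1) * (1 - p) ^ (n - x + 1)) (fun p => p * likelihood n x p * (1 - p))),
    (RInt_ext_R (fun p => p ^ (x + 1) * (1 - p) ^ (n - x)) (fun p => likelihood n x p * p)),
    (RInt_ext_R (fun p => p ^ x * (1 - p) ^ (n - x + 1)) (fun p => likelihood n x p * (1 - p)))
    by (intros; unfold likelihood; rewrite ?pow_add; ring).
  rewrite (RInt_tri_prior (fun p => p * likelihood n x p)), (RInt_tri_prior (likelihood n x))
    by (auto using continuous_likelihood; intro; solve_continuous; apply continuous_likelihood).
  pose proof (tri_evidence_pos (likelihood n x) (continuous_likelihood n x) (likelihood_pos n x) a Ha).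
  field. lra.
Qed.

Theorem theorem2 (n x : nat) (hn : (1 <= n)%nat) (hx : (x <= n)%nat) :
  exists! tau : R, (0 < tau < 1) /\ post_mean n x tau = tau.
Proof.
  assert (Hfixed : forall a, 0 < a < 1 ->
            post_mean n x a = a <-> drift (likelihood n x) a = 0).
  { intros a Ha. rewrite post_mean_tri_posterior_mean by exact Ha.
    apply tri_posterior_mean_fixed_iff;
      auto using continuous_likelihood, likelihood_pos. }
  destruct (drift_unique_root (likelihood n x) (continuous_likelihood n x) (likelihood_pos n x))
    as [tau [[Htau Hroot] Huniq]].
  exists tau. split.
  - split; [exact Htau | apply Hfixed; assumption].
  - intros a [Ha Hpm]. apply Huniq. split; [exact Ha | apply Hfixed; assumption].
Qed.
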